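(* For $n\in\mathbb{N}^\star$ let $\phi_n(x)=\int_0^\pi e^{-2x\sin\eta}e^{2in\eta}\,\mathrm{d}\eta$ and $\varphi_n(x)=n\phi_n(nx)$. Then for every $x>0$ and $n\ge1$, $$\frac{4n^2}{4n^2+1}\frac{x}{1+x^2}\le\varphi_n(x)\le\frac{4n^2}{4n^2-1}\frac{x}{1+x^2}$$ and $$\frac{4n^2}{4n^2+1}\frac{x}{n^2+x^2}\le\phi_n(x)\le\frac{4n^2}{4n^2-1}\frac{x}{n^2+x^2}.$$ *)

From Stdlib Require Import Reals.
From Coquelicot Require Import Coquelicot.
Open Scope R_scope.

Definition cexpi (t : R) : C := (cos t, sin t).

Definition phi (n : nat) (x : R) : C :=
  @RInt C_R_CompleteNormedModule (fun eta : R => Cmult (RtoC (exp (-2 * x * sin eta))) (cexpi (2 * INR n * eta))) 0 PI.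

Definition varphi (n : nat) (x : R) : C :=
  Cmult (RtoC (INR n)) (phi n (INR n * x)).

(* The imaginary part of [phi n x] vanishes by the symmetry [t -> PI - t], and its real part
   [psi(x) = \int_0^PI exp (-2 x sin t) cos (2 n t) dt] solves
     [(n^2 + x^2) psi - x/4 psi' - x^2/4 psi'' = x],
   with [psi 0 = 0] and [psi x = O(1/x)].  This operator obeys a minimum principle on
   [(0, +oo)]: at a negative minimum of [e], [e' = 0] and [e'' >= 0] make the left-hand
   side negative.
   It maps [h(x) = x / (n^2 + x^2)] to [x (1 - Q / (4 (n^2 + x^2)^3))] with
   [Q = n^4 - 6 n^2 x^2 + x^4] and [|n^2 Q| <= (n^2 + x^2)^3], so [c h] is a sub- resp.
   supersolution for [c = 4 n^2 / (4 n^2 + 1)] resp. [c = 4 n^2 / (4 n^2 - 1)].  Comparing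
   [psi] with them gives the bounds on [phi n], and rescaling those on [varphi n]. *)

From Stdlib Require Import Reals Lra Lia.
From Coquelicot Require Import Coquelicot.
Open Scope R_scope.

Lemma is_derive_pos_left (f : R -> R) (x l : R) :
  is_derive f x l -> 0 < l -> exists d, 0 < d /\ forall y, x - d < y < x -> f y < f x.
Proof.
  intros Hf Hl. apply is_derive_Reals in Hf.
  destruct (Hf l Hl) as [d Hd]. exists d. split; [apply cond_pos |].
  intros y Hy.
  assert (Hq : Rabs ((f (x + (y - x)) - f x) / (y - x) - l) < l)
    by (apply Hd; [lra | rewrite Rabs_left; lra]).
  replace (x + (y - x)) with y in Hq by ring.
  apply Rabs_def2 in Hq.
  assert (Hpos : 0 < (f y - f x) / (y - x)) by lra.
  assert (E : f y - f x = (f y - f x) / (y - x) * (y - x)) by (field; lra).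
  nra.
Qed.

Lemma is_derive_interior_min (f : R -> R) (a b c l : R) :
  a < c < b -> is_derive f c l -> (forall y, a < y < b -> f c <= f y) -> l = 0.
Proof.
  intros Hc Hf Hmin. apply is_derive_Reals in Hf.
  rewrite <- (derive_pt_eq_0 f c l (exist _ l Hf) Hf).
  apply (deriv_minimum f a b c); try lra.
  intros y Hay Hyb. apply Hmin. lra.
Qed.

Lemma deriv2_nonneg_at_left_min (e e1 e2 : R -> R) (a x : R) :
  (forall y, is_derive e y (e1 y)) -> (forall y, is_derive e1 y (e2 y)) ->
  a < x -> e1 x = 0 -> (forall y, a < y < x -> e x <= e y) -> 0 <= e2 x.
Proof.
  intros D1 D2 Hax He1 Hmin.
  destruct (Rle_or_lt 0 (e2 x)) as [| Hneg]; [assumption | exfalso].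
  destruct (is_derive_pos_left (fun y => - e1 y) x (- e2 x)) as [d [Hd Hleft]];
    [apply (@is_derive_opp R_AbsRing R_NormedModule), D2 | lra |].
  set (y := Rmax (x - d / 2) ((a + x) / 2)).
  assert (Hy : x - d < y < x /\ a < y).
  { pose proof (Rmax_l (x - d / 2) ((a + x) / 2)). pose proof (Rmax_r (x - d / 2) ((a + x) / 2)).
    unfold y. repeat split; try lra. apply Rmax_lub_lt; lra. }
  destruct (MVT_cor2 e e1 y x) as [c [Hmvt Hc]]; [lra | intros; apply is_derive_Reals, D1 |].
  assert (Hc1 : 0 < e1 c) by (specialize (Hleft c); lra).
  assert (e x <= e y) by (apply Hmin; lra).
  nra.
Qed.

Lemma interior_min_below (e : R -> R) (a b x : R) :
  (forall y, continuity_pt e y) -> a < x < b -> e x < e a -> e x < e b ->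
  exists x0, a < x0 < b /\ e x0 <= e x /\ forall y, a <= y <= b -> e x0 <= e y.
Proof.
  intros Hc Hx Ha Hb.
  destruct (continuity_ab_min e a b) as [x0 [Hmin Hx0]]; [lra | intros; apply Hc |].
  assert (e x0 <= e x) by (apply Hmin; lra).
  exists x0. repeat split; auto.
  - destruct (Req_dec x0 a); [subst; lra | lra].
  - destruct (Req_dec x0 b); [subst; lra | lra].
Qed.

Lemma continuity_pt_above_right (e : R -> R) (p x : R) :
  continuity_pt e p -> p < x -> e x < e p -> exists a, p < a < x /\ e x < e a.
Proof.
  intros Hc Hpx Hex.
  destruct (Hc (e p - e x)) as [d [Hd Hnear]]; [lra |].
  set (a := p + Rmin (d / 2) ((x - p) / 2)).
  pose proof (Rmin_l (d / 2) ((x - p) / 2)). pose proof (Rmin_r (d / 2) ((x - p) / 2)).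
  assert (0 < Rmin (d / 2) ((x - p) / 2)) by (apply Rmin_glb_lt; lra).
  exists a. split; [unfold a; lra |].
  assert (Hq : R_dist (e a) (e p) < e p - e x).
  { apply Hnear. split; [split; [exact I | unfold a; lra] |].
    simpl. unfold R_dist, a. rewrite Rabs_right; lra. }
  unfold R_dist in Hq. apply Rabs_def2 in Hq. lra.
Qed.

Lemma inv_lower_bound_above (e : R -> R) (K x : R) :
  (forall b, 0 < b -> - K / b <= e b) -> 0 < x -> e x < 0 -> exists b, x < b /\ e x < e b.
Proof.
  intros Hdecay Hx Hex.
  assert (0 <= Rabs K / - e x) by (apply Rcomplements.Rdiv_le_0_compat; [apply Rabs_pos | lra]).
  exists (x + 1 + Rabs K / - e x). set (b := x + 1 + Rabs K / - e x).
  assert (Hxb : x < b) by (unfold b; lra).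
  split; [exact Hxb |].
  assert (K < - e x * b).
  { unfold b. replace (- e x * (x + 1 + Rabs K / - e x)) with (- e x * (x + 1) + Rabs K)
      by (field; lra).
    assert (0 < - e x * (x + 1)) by (apply Rmult_lt_0_compat; lra).
    pose proof (Rle_abs K). lra. }
  assert (K / b < - e x).
  { apply (Rmult_lt_reg_r b); [lra |]. unfold Rdiv. rewrite Rmult_assoc, Rinv_l by lra. lra. }
  specialize (Hdecay b ltac:(lra)). unfold Rdiv in *. lra.
Qed.

Lemma nonneg_of_no_negative_min (e e1 e2 : R -> R) (K x : R) :
  (forall y, is_derive e y (e1 y)) -> (forall y, is_derive e1 y (e2 y)) ->
  e 0 = 0 -> (forall b, 0 < b -> - K / b <= e b) ->
  (forall y, 0 < y -> e y < 0 -> e1 y = 0 -> e2 y < 0) ->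
  0 < x -> 0 <= e x.
Proof.
  intros D1 D2 He0 Hdecay Hcrit Hx.
  destruct (Rle_or_lt 0 (e x)) as [| Hneg]; [assumption | exfalso].
  assert (Hc : forall y, continuity_pt e y).
  { intros y. apply continuity_pt_filterlim.
    apply (@ex_derive_continuous R_AbsRing R_NormedModule). exists (e1 y). apply D1. }
  destruct (continuity_pt_above_right e 0 x (Hc 0) Hx ltac:(lra)) as [a [Hax Hea]].
  destruct (inv_lower_bound_above e K x Hdecay Hx Hneg) as [b [Hxb Heb]].
  destruct (interior_min_below e a b x Hc ltac:(lra) Hea Heb) as [x0 [Hx0 [Hx0x Hmin]]].
  assert (He1 : e1 x0 = 0).
  { apply (is_derive_interior_min e a b x0); [lra | apply D1 | intros; apply Hmin; lra]. }
  assert (e2 x0 < 0) by (apply Hcrit; lra).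
  assert (0 <= e2 x0).
  { apply (deriv2_nonneg_at_left_min e e1 e2 a x0); [apply D1 | apply D2 | lra | exact He1 |].
    intros; apply Hmin; lra. }
  lra.
Qed.

Definition ode_op (N x u u1 u2 : R) : R := (N ^ 2 + x ^ 2) * u - x / 4 * u1 - x ^ 2 / 4 * u2.

Lemma ode_op_min_principle (N K x : R) (e e1 e2 : R -> R) :
  (forall y, is_derive e y (e1 y)) -> (forall y, is_derive e1 y (e2 y)) ->
  e 0 = 0 -> (forall b, 0 < b -> - K / b <= e b) ->
  (forall y, 0 < y -> 0 <= ode_op N y (e y) (e1 y) (e2 y)) ->
  0 < x -> 0 <= e x.
Proof.
  intros D1 D2 He0 Hdecay Hsuper.
  apply (nonneg_of_no_negative_min e e1 e2 K x D1 D2 He0 Hdecay).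
  intros y Hy Hey He1y. specialize (Hsuper y Hy). unfold ode_op in Hsuper.
  rewrite He1y in Hsuper.
  assert ((N ^ 2 + y ^ 2) * e y < 0) by (apply Rmult_pos_neg; nra).
  assert (Hy2 : 0 < y ^ 2 / 4) by nra.
  destruct (Rlt_or_le (e2 y) 0) as [| Hge]; [assumption |].
  pose proof (Rmult_le_pos _ _ (Rlt_le _ _ Hy2) Hge). lra.
Qed.

Definition esin_int (g : R -> R) (x : R) : R :=
  RInt (fun t => exp (-2 * x * sin t) * g t) 0 PI.

Section ExpSinIntegral.

Variable g : R -> R.
Hypothesis g_cont : forall t, continuous g t.

Lemma continuous_sin_weight : forall t, continuous (fun t => -2 * sin t * g t) t.
Proof.
  intros t. apply (continuous_mult (fun t => -2 * sin t) g); [| apply g_cont].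
  apply (@ex_derive_continuous R_AbsRing R_NormedModule). auto_derive. exact I.
Qed.

Lemma ex_RInt_esin (x : R) : ex_RInt (fun t => exp (-2 * x * sin t) * g t) 0 PI.
Proof.
  apply (@ex_RInt_continuous R_CompleteNormedModule). intros t _.
  apply (continuous_mult (fun t => exp (-2 * x * sin t)) g); [| apply g_cont].
  apply (@ex_derive_continuous R_AbsRing R_NormedModule). auto_derive. exact I.
Qed.

Lemma continuity_2d_esin_integrand (x t : R) :
  continuity_2d_pt (fun u v => exp (-2 * u * sin v) * g v) x t.
Proof.
  apply continuity_2d_pt_mult.
  - apply (continuity_1d_2d_pt_comp exp (fun u v => -2 * u * sin v)).
    + apply derivable_continuous_pt, derivable_pt_exp.
    + apply continuity_2d_pt_mult.
      * apply continuity_2d_pt_mult; [apply continuity_2d_pt_const | apply continuity_2d_pt_id1].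
      * apply (continuity_1d_2d_pt_comp sin (fun u v => v));
          [apply derivable_continuous_pt, derivable_pt_sin | apply continuity_2d_pt_id2].
  - apply (continuity_1d_2d_pt_comp g (fun u v => v));
      [apply continuity_pt_filterlim, g_cont | apply continuity_2d_pt_id2].
Qed.

End ExpSinIntegral.

Lemma is_derive_esin_int (g : R -> R) (x : R) :
  (forall t, continuous g t) ->
  is_derive (esin_int g) x (esin_int (fun t => -2 * sin t * g t) x).
Proof.
  intros Hg.
  assert (Dparam : forall u t, Derive (fun z => exp (-2 * z * sin t) * g t) u
                               = exp (-2 * u * sin t) * (-2 * sin t * g t)).
  { intros u t. apply is_derive_unique. auto_derive; [exact I | ring]. }
  unfold esin_int. erewrite RInt_ext.
  - apply (is_derive_RInt_param (fun u t => exp (-2 * u * sin t) * g t)).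
    + apply filter_forall. intros y t _. auto_derive. exact I.
    + intros t _. eapply continuity_2d_pt_ext; [intros u v; symmetry; apply Dparam |].
      apply continuity_2d_esin_integrand, continuous_sin_weight, Hg.
    + apply filter_forall. intros y. apply ex_RInt_esin, Hg.
  - intros t _. symmetry. apply Dparam.
Qed.

Lemma ode_op_esin_int (N x : R) (g0 g1 g2 : R -> R) :
  (forall t, continuous g0 t) -> (forall t, continuous g1 t) -> (forall t, continuous g2 t) ->
  ode_op N x (esin_int g0 x) (esin_int g1 x) (esin_int g2 x)
  = esin_int (fun t => ode_op N x (g0 t) (g1 t) (g2 t)) x.
Proof.
  intros H0 H1 H2. unfold esin_int.
  symmetry. apply (@is_RInt_unique R_CompleteNormedModule).
  apply (@is_RInt_ext R_NormedModule (fun t => minus (minus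
           (scal (N ^ 2 + x ^ 2) (exp (-2 * x * sin t) * g0 t))
           (scal (x / 4) (exp (-2 * x * sin t) * g1 t)))
           (scal (x ^ 2 / 4) (exp (-2 * x * sin t) * g2 t)))).
  - intros t _. unfold ode_op, minus, plus, opp, scal; simpl. unfold mult; simpl. ring.
  - apply (@is_RInt_minus R_NormedModule); [apply (@is_RInt_minus R_NormedModule) |];
      apply (@is_RInt_scal R_NormedModule);
      apply (@RInt_correct R_CompleteNormedModule), ex_RInt_esin; assumption.
Qed.

Definition psi (N : R) : R -> R := esin_int (fun t => cos (2 * N * t)).
Definition psi1 (N : R) : R -> R := esin_int (fun t => -2 * sin t * cos (2 * N * t)).
Definition psi2 (N : R) : R -> R :=
  esin_int (fun t => -2 * sin t * (-2 * sin t * cos (2 * N * t))).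

Lemma continuous_cos_2N (N t : R) : continuous (fun t => cos (2 * N * t)) t.
Proof. apply (@ex_derive_continuous R_AbsRing R_NormedModule). auto_derive. exact I. Qed.

Lemma is_derive_psi (N x : R) : is_derive (psi N) x (psi1 N x).
Proof. apply is_derive_esin_int, continuous_cos_2N. Qed.

Lemma is_derive_psi1 (N x : R) : is_derive (psi1 N) x (psi2 N x).
Proof. apply is_derive_esin_int, continuous_sin_weight, continuous_cos_2N. Qed.

Lemma cos_2nPI (n : nat) : cos (2 * INR n * PI) = 1.
Proof. rewrite <- (Rplus_0_l (2 * INR n * PI)), cos_period. apply cos_0. Qed.

Lemma sin_2nPI (n : nat) : sin (2 * INR n * PI) = 0.
Proof. rewrite <- (Rplus_0_l (2 * INR n * PI)), sin_period. apply sin_0. Qed.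

(* The integrand is [(E'' c - E c'') / 4] for [E t = exp (-2 x sin t)] and
   [c t = cos (2 N t)], since [c'' = - 4 N^2 c]; hence it integrates to the
   boundary values of the Wronskian [(E' c - E c') / 4]. *)
Lemma psi_ode (n : nat) (x : R) :
  ode_op (INR n) x (psi (INR n) x) (psi1 (INR n) x) (psi2 (INR n) x) = x.
Proof.
  set (N := INR n).
  set (W := fun t => (-2 * x * cos t * exp (-2 * x * sin t) * cos (2 * N * t)
                      + 2 * N * exp (-2 * x * sin t) * sin (2 * N * t)) / 4).
  unfold psi, psi1, psi2.
  rewrite ode_op_esin_int by (repeat apply continuous_sin_weight; apply continuous_cos_2N).
  unfold esin_int. rewrite (is_RInt_unique _ 0 PI (minus (W PI) (W 0))).
  - unfold minus, plus, opp, W; simpl. unfold N.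
    rewrite sin_PI, cos_PI, sin_0, cos_0, cos_2nPI, sin_2nPI, !Rmult_0_r, exp_0, cos_0, sin_0.
    field.
  - apply (@is_RInt_derive R_CompleteNormedModule).
    + intros t _. unfold W, ode_op. auto_derive; [exact I |].
      pose proof (sin2_cos2 t) as Hsc. unfold Rsqr in Hsc.
      replace (N ^ 2 + x ^ 2) with (N ^ 2 + x ^ 2 * (sin t * sin t + cos t * cos t))
        by (rewrite Hsc; ring).
      field.
    + intros t _. apply (@ex_derive_continuous R_AbsRing R_NormedModule).
      unfold ode_op. auto_derive. exact I.
Qed.

Lemma psi_at_0 (n : nat) : (1 <= n)%nat -> psi (INR n) 0 = 0.
Proof.
  intros Hn. assert (HN : 1 <= INR n) by (apply (le_INR 1); assumption).
  unfold psi, esin_int.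
  rewrite (is_RInt_unique _ 0 PI
             (minus (sin (2 * INR n * PI) / (2 * INR n)) (sin (2 * INR n * 0) / (2 * INR n)))).
  - rewrite sin_2nPI, Rmult_0_r, sin_0. unfold minus, plus, opp; simpl. field. lra.
  - apply (@is_RInt_derive R_CompleteNormedModule (fun t => sin (2 * INR n * t) / (2 * INR n))).
    + intros t _. auto_derive; [lra |]. rewrite Rmult_0_r, Rmult_0_l, exp_0. field. lra.
    + intros t _. apply (@ex_derive_continuous R_AbsRing R_NormedModule). auto_derive. exact I.
Qed.

Lemma mul_exp_neg_le (b s : R) : 0 < b -> s * exp (-2 * b * s) <= / (2 * b).
Proof.
  intros Hb.
  pose proof (exp_ineq1_le (2 * b * s)).
  assert (Hinv : exp (2 * b * s) * exp (-2 * b * s) = 1)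
    by (rewrite <- exp_plus, <- exp_0; f_equal; ring).
  pose proof (exp_pos (-2 * b * s)).
  apply (Rmult_le_reg_l (2 * b)); [lra |]. rewrite Rinv_r by lra. nra.
Qed.

(* With [E = exp (-2 b sin t)]: [E <= sin t * E + cos t ^ 2 * E <= / (2 b) + cos t ^ 2 * E],
   and adding [sin t * E / (2 b) >= 0] makes the bound the derivative of
   [(t - cos t * E) / (2 b)]. *)
Lemma RInt_exp_sin_le (b : R) :
  0 < b -> RInt (fun t => exp (-2 * b * sin t)) 0 PI <= (2 + PI) / (2 * b).
Proof.
  intros Hb. pose proof PI_RGT_0.
  set (dom := fun t => sin t * exp (-2 * b * sin t) / (2 * b)
                       + cos t ^ 2 * exp (-2 * b * sin t) + / (2 * b)).
  assert (Hdom : is_RInt dom 0 PI ((2 + PI) / (2 * b))).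
  { set (F := fun t => (t - cos t * exp (-2 * b * sin t)) / (2 * b)).
    replace ((2 + PI) / (2 * b)) with (minus (F PI) (F 0)).
    - apply (@is_RInt_derive R_CompleteNormedModule).
      + intros t _. unfold F, dom. auto_derive; [lra | field; lra].
      + intros t _. apply (@ex_derive_continuous R_AbsRing R_NormedModule).
        unfold dom. auto_derive. lra.
    - unfold minus, plus, opp, F; simpl.
      rewrite sin_PI, cos_PI, sin_0, cos_0, Rmult_0_r, exp_0. field. lra. }
  rewrite <- (is_RInt_unique _ _ _ _ Hdom).
  apply RInt_le; [lra | | eexists; exact Hdom |].
  - apply (@ex_RInt_continuous R_CompleteNormedModule). intros t _.
    apply (@ex_derive_continuous R_AbsRing R_NormedModule). auto_derive. exact I.
  - intros t Ht. unfold dom.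
    pose proof (sin_ge_0 t ltac:(lra) ltac:(lra)). pose proof (SIN_bound t).
    pose proof (sin2_cos2 t) as Hsc. unfold Rsqr in Hsc.
    pose proof (mul_exp_neg_le b (sin t) Hb).
    pose proof (exp_pos (-2 * b * sin t)).
    set (E := exp (-2 * b * sin t)) in *.
    assert (0 <= sin t * E / (2 * b))
      by (apply Rcomplements.Rdiv_le_0_compat; [apply Rmult_le_pos | ]; lra).
    assert (0 <= (sin t - sin t * sin t) * E) by (apply Rmult_le_pos; nra).
    nra.
Qed.

Lemma abs_esin_int_le (g : R -> R) (b : R) :
  (forall t, continuous g t) -> (forall t, Rabs (g t) <= 1) -> 0 < b ->
  Rabs (esin_int g b) <= (2 + PI) / (2 * b).
Proof.
  intros Hg Hg1 Hb. pose proof PI_RGT_0. unfold esin_int.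
  eapply Rle_trans; [apply abs_RInt_le; [lra | apply ex_RInt_esin, Hg] |].
  eapply Rle_trans; [| apply RInt_exp_sin_le, Hb].
  apply RInt_le; [lra | | |].
  - apply (@ex_RInt_continuous R_CompleteNormedModule). intros t _.
    apply (continuous_comp _ Rabs); [| apply continuous_Rabs].
    apply (continuous_mult (fun t => exp (-2 * b * sin t)) g); [| apply Hg].
    apply (@ex_derive_continuous R_AbsRing R_NormedModule). auto_derive. exact I.
  - apply (@ex_RInt_continuous R_CompleteNormedModule). intros t _.
    apply (@ex_derive_continuous R_AbsRing R_NormedModule). auto_derive. exact I.
  - intros t _. pose proof (exp_pos (-2 * b * sin t)). pose proof (Rabs_pos (g t)).
    rewrite Rabs_mult, Rabs_pos_eq by lra. specialize (Hg1 t). nra.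
Qed.

Lemma abs_psi_le (N b : R) : 0 < b -> Rabs (psi N b) <= (2 + PI) / (2 * b).
Proof.
  intros Hb. apply abs_esin_int_le; [apply continuous_cos_2N | | exact Hb].
  intros t. apply Rabs_le, COS_bound.
Qed.

Definition h0 (N x : R) : R := x / (N ^ 2 + x ^ 2).
Definition h1 (N x : R) : R := (N ^ 2 - x ^ 2) / (N ^ 2 + x ^ 2) ^ 2.
Definition h2 (N x : R) : R := (2 * x ^ 3 - 6 * N ^ 2 * x) / (N ^ 2 + x ^ 2) ^ 3.

Lemma is_derive_h0 (N x : R) : 0 < N -> is_derive (h0 N) x (h1 N x).
Proof. intros HN. unfold h0, h1. auto_derive; [nra | field; nra]. Qed.

Lemma is_derive_h1 (N x : R) : 0 < N -> is_derive (h1 N) x (h2 N x).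
Proof.
  intros HN. assert (HD : N ^ 2 + x ^ 2 <> 0) by nra. unfold h1, h2. auto_derive.
  - replace (_ * _) with ((N ^ 2 + x ^ 2) ^ 2) by ring. apply pow_nonzero, HD.
  - field. exact HD.
Qed.

Lemma h0_le_inv (N b : R) : 0 < b -> 0 <= h0 N b <= / b.
Proof.
  intros Hb. unfold h0. split.
  - apply Rcomplements.Rdiv_le_0_compat; nra.
  - assert (/ b - b / (N ^ 2 + b ^ 2) = N ^ 2 / (b * (N ^ 2 + b ^ 2))) by (field; split; nra).
    assert (0 <= N ^ 2 / (b * (N ^ 2 + b ^ 2)))
      by (apply Rcomplements.Rdiv_le_0_compat; [nra | apply Rmult_lt_0_compat; nra]).
    lra.
Qed.

Lemma ode_op_h0 (N x : R) : 0 < N ->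
  ode_op N x (h0 N x) (h1 N x) (h2 N x)
  = x - x * (N ^ 4 - 6 * N ^ 2 * x ^ 2 + x ^ 4) / (4 * (N ^ 2 + x ^ 2) ^ 3).
Proof. intros HN. unfold ode_op, h0, h1, h2. field. nra. Qed.

Lemma subsolution_const (N y : R) : 0 < N -> 0 < y ->
  4 * N ^ 2 / (4 * N ^ 2 + 1) * ode_op N y (h0 N y) (h1 N y) (h2 N y) <= y.
Proof.
  intros HN Hy. rewrite ode_op_h0 by exact HN.
  replace (N ^ 4 - 6 * N ^ 2 * y ^ 2 + y ^ 4) with ((N ^ 2) ^ 2 - 6 * N ^ 2 * y ^ 2 + (y ^ 2) ^ 2)
    by ring.
  set (a := N ^ 2). set (b := y ^ 2).
  assert (Ha : 0 < a) by (unfold a; nra). assert (Hb : 0 < b) by (unfold b; nra).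
  assert (HD : 0 < (a + b) ^ 3) by (apply pow_lt; lra).
  assert (Hpoly : 0 <= (a + b) ^ 3 + a * (a ^ 2 - 6 * a * b + b ^ 2)).
  { assert (0 <= a * (2 * (a - 3 * b / 4) ^ 2 + 23 / 8 * b ^ 2)) by (apply Rmult_le_pos; nra).
    assert (0 <= b ^ 3) by (apply pow_le; lra).
    nra. }
  replace (4 * a / (4 * a + 1) * (y - y * (a ^ 2 - 6 * a * b + b ^ 2) / (4 * (a + b) ^ 3)))
    with (y - y * (((a + b) ^ 3 + a * (a ^ 2 - 6 * a * b + b ^ 2)) / ((4 * a + 1) * (a + b) ^ 3)))
    by (field; split; lra).
  enough (0 <= y * (((a + b) ^ 3 + a * (a ^ 2 - 6 * a * b + b ^ 2)) / ((4 * a + 1) * (a + b) ^ 3)))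
    by lra.
  apply Rmult_le_pos; [lra |].
  apply Rcomplements.Rdiv_le_0_compat; [exact Hpoly | apply Rmult_lt_0_compat; lra].
Qed.

Lemma supersolution_const (N y : R) : 1 / 2 < N -> 0 < y ->
  y <= 4 * N ^ 2 / (4 * N ^ 2 - 1) * ode_op N y (h0 N y) (h1 N y) (h2 N y).
Proof.
  intros HN Hy. rewrite ode_op_h0 by lra.
  replace (N ^ 4 - 6 * N ^ 2 * y ^ 2 + y ^ 4) with ((N ^ 2) ^ 2 - 6 * N ^ 2 * y ^ 2 + (y ^ 2) ^ 2)
    by ring.
  set (a := N ^ 2). set (b := y ^ 2).
  assert (Ha : 1 / 4 < a) by (unfold a; nra). assert (Hb : 0 < b) by (unfold b; nra).
  assert (HD : 0 < (a + b) ^ 3) by (apply pow_lt; lra).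
  assert (Hpoly : 0 <= (a + b) ^ 3 - a * (a ^ 2 - 6 * a * b + b ^ 2)).
  { replace ((a + b) ^ 3 - a * (a ^ 2 - 6 * a * b + b ^ 2))
      with (9 * a ^ 2 * b + 2 * a * b ^ 2 + b ^ 3) by ring.
    assert (0 <= b ^ 3) by (apply pow_le; lra).
    assert (0 <= a ^ 2 * b) by (apply Rmult_le_pos; nra).
    assert (0 <= a * b ^ 2) by (apply Rmult_le_pos; nra).
    lra. }
  replace (4 * a / (4 * a - 1) * (y - y * (a ^ 2 - 6 * a * b + b ^ 2) / (4 * (a + b) ^ 3)))
    with (y + y * (((a + b) ^ 3 - a * (a ^ 2 - 6 * a * b + b ^ 2)) / ((4 * a - 1) * (a + b) ^ 3)))
    by (field; split; lra).
  enough (0 <= y * (((a + b) ^ 3 - a * (a ^ 2 - 6 * a * b + b ^ 2)) / ((4 * a - 1) * (a + b) ^ 3)))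
    by lra.
  apply Rmult_le_pos; [lra |].
  apply Rcomplements.Rdiv_le_0_compat; [exact Hpoly | apply Rmult_lt_0_compat; lra].
Qed.

Lemma psi_ge_of_subsolution (n : nat) (c x : R) :
  (1 <= n)%nat -> 0 <= c ->
  (forall y, 0 < y -> c * ode_op (INR n) y (h0 (INR n) y) (h1 (INR n) y) (h2 (INR n) y) <= y) ->
  0 < x -> c * h0 (INR n) x <= psi (INR n) x.
Proof.
  intros Hn Hc Hsub Hx. assert (HN : 0 < INR n) by (apply lt_0_INR; lia).
  set (N := INR n) in *.
  enough (0 <= psi N x - c * h0 N x) by lra.
  apply (ode_op_min_principle N ((2 + PI) / 2 + c) x
           (fun y => psi N y - c * h0 N y) (fun y => psi1 N y - c * h1 N y)
           (fun y => psi2 N y - c * h2 N y)); [| | | | | exact Hx].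
  - intros y. apply (@is_derive_minus R_AbsRing R_NormedModule);
      [apply is_derive_psi | apply is_derive_scal, is_derive_h0, HN].
  - intros y. apply (@is_derive_minus R_AbsRing R_NormedModule);
      [apply is_derive_psi1 | apply is_derive_scal, is_derive_h1, HN].
  - unfold N. rewrite psi_at_0 by exact Hn. unfold h0, Rdiv. ring.
  - intros b Hb. pose proof (abs_psi_le N b Hb) as Hpsi. pose proof (h0_le_inv N b Hb).
    apply Rabs_le_between in Hpsi.
    assert (c * h0 N b <= c / b) by (apply Rmult_le_compat_l; lra).
    replace (- ((2 + PI) / 2 + c) / b) with (- ((2 + PI) / (2 * b)) - c / b) by (field; lra).
    lra.
  - intros y Hy. specialize (Hsub y Hy). pose proof (psi_ode n y) as Hode. fold N in Hode.
    unfold ode_op in *. lra.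
Qed.

Lemma psi_le_of_supersolution (n : nat) (c x : R) :
  (1 <= n)%nat -> 0 <= c ->
  (forall y, 0 < y -> y <= c * ode_op (INR n) y (h0 (INR n) y) (h1 (INR n) y) (h2 (INR n) y)) ->
  0 < x -> psi (INR n) x <= c * h0 (INR n) x.
Proof.
  intros Hn Hc Hsuper Hx. assert (HN : 0 < INR n) by (apply lt_0_INR; lia).
  set (N := INR n) in *.
  enough (0 <= c * h0 N x - psi N x) by lra.
  apply (ode_op_min_principle N ((2 + PI) / 2) x
           (fun y => c * h0 N y - psi N y) (fun y => c * h1 N y - psi1 N y)
           (fun y => c * h2 N y - psi2 N y)); [| | | | | exact Hx].
  - intros y. apply (@is_derive_minus R_AbsRing R_NormedModule);
      [apply is_derive_scal, is_derive_h0, HN | apply is_derive_psi].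
  - intros y. apply (@is_derive_minus R_AbsRing R_NormedModule);
      [apply is_derive_scal, is_derive_h1, HN | apply is_derive_psi1].
  - unfold N. rewrite psi_at_0 by exact Hn. unfold h0, Rdiv. ring.
  - intros b Hb. pose proof (abs_psi_le N b Hb) as Hpsi. pose proof (h0_le_inv N b Hb).
    apply Rabs_le_between in Hpsi.
    assert (0 <= c * h0 N b) by (apply Rmult_le_pos; lra).
    replace (- ((2 + PI) / 2) / b) with (- ((2 + PI) / (2 * b))) by (field; lra).
    lra.
  - intros y Hy. specialize (Hsuper y Hy). pose proof (psi_ode n y) as Hode. fold N in Hode.
    unfold ode_op in *. lra.
Qed.

Lemma psi_lower (n : nat) (x : R) : (1 <= n)%nat -> 0 < x ->
  4 * INR n ^ 2 / (4 * INR n ^ 2 + 1) * (x / (INR n ^ 2 + x ^ 2)) <= psi (INR n) x.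
Proof.
  intros Hn Hx. assert (HN : 0 < INR n) by (apply lt_0_INR; lia).
  apply psi_ge_of_subsolution; [exact Hn | | | exact Hx].
  - apply Rcomplements.Rdiv_le_0_compat; nra.
  - intros y Hy. apply subsolution_const; assumption.
Qed.

Lemma psi_upper (n : nat) (x : R) : (1 <= n)%nat -> 0 < x ->
  psi (INR n) x <= 4 * INR n ^ 2 / (4 * INR n ^ 2 - 1) * (x / (INR n ^ 2 + x ^ 2)).
Proof.
  intros Hn Hx. assert (HN : 1 <= INR n) by (apply (le_INR 1); assumption).
  apply psi_le_of_supersolution; [exact Hn | | | exact Hx].
  - apply Rcomplements.Rdiv_le_0_compat; nra.
  - intros y Hy. apply supersolution_const; [lra | assumption].
Qed.

(* The substitution [t -> PI - t] fixes [sin t] and flips the sign of [sin (2 n t)]. *)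
Lemma RInt_exp_sin_sin_2n (n : nat) (x : R) :
  RInt (fun t => exp (-2 * x * sin t) * sin (2 * INR n * t)) 0 PI = 0.
Proof.
  set (f := fun t => exp (-2 * x * sin t) * sin (2 * INR n * t)).
  assert (Hex : forall a b, ex_RInt f a b).
  { intros a b. apply (@ex_RInt_continuous R_CompleteNormedModule). intros t _.
    apply (@ex_derive_continuous R_AbsRing R_NormedModule). unfold f. auto_derive. exact I. }
  assert (Hsym : RInt (fun t => scal (-1) (f (-1 * t + PI))) 0 PI = RInt f 0 PI).
  { apply RInt_ext. intros t _. unfold f, scal; simpl. unfold mult; simpl.
    replace (-1 * t + PI) with (PI - t) by ring. rewrite sin_PI_x.
    replace (2 * INR n * (PI - t)) with (- (2 * INR n * t) + 2 * INR n * PI) by ring.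
    rewrite sin_period, sin_neg. ring. }
  rewrite (@RInt_comp_lin R_CompleteNormedModule) in Hsym by apply Hex.
  replace (-1 * 0 + PI) with PI in Hsym by ring. replace (-1 * PI + PI) with 0 in Hsym by ring.
  rewrite <- (@opp_RInt_swap R_CompleteNormedModule) in Hsym by apply Hex.
  unfold opp in Hsym; simpl in Hsym. fold f. lra.
Qed.

Lemma phi_eq_psi (n : nat) (x : R) : phi n x = RtoC (psi (INR n) x).
Proof.
  unfold phi. apply (@is_RInt_unique C_R_CompleteNormedModule).
  apply (is_RInt_fct_extend_pair (U := R_NormedModule) (V := R_NormedModule)).
  - apply (@is_RInt_ext R_NormedModule (fun t => exp (-2 * x * sin t) * cos (2 * INR n * t))).
    + intros t _. unfold cexpi. simpl. ring.
    + apply (@RInt_correct R_CompleteNormedModule), ex_RInt_esin, continuous_cos_2N.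
  - apply (@is_RInt_ext R_NormedModule (fun t => exp (-2 * x * sin t) * sin (2 * INR n * t))).
    + intros t _. unfold cexpi. simpl. ring.
    + assert (Hex : ex_RInt (fun t => exp (-2 * x * sin t) * sin (2 * INR n * t)) 0 PI).
      { apply (@ex_RInt_continuous R_CompleteNormedModule). intros t _.
        apply (@ex_derive_continuous R_AbsRing R_NormedModule). auto_derive. exact I. }
      pose proof (@RInt_correct R_CompleteNormedModule _ _ _ Hex) as Hint.
      rewrite RInt_exp_sin_sin_2n in Hint. exact Hint.
Qed.

Theorem lemma3p5 (n : nat) (x : R) :
  (1 <= n)%nat -> 0 < x ->
  exists r s : R,
    varphi n x = RtoC r /\ phi n x = RtoC s /\
    4 * INR n ^ 2 / (4 * INR n ^ 2 + 1) * (x / (1 + x ^ 2)) <= r /\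
    r <= 4 * INR n ^ 2 / (4 * INR n ^ 2 - 1) * (x / (1 + x ^ 2)) /\
    4 * INR n ^ 2 / (4 * INR n ^ 2 + 1) * (x / (INR n ^ 2 + x ^ 2)) <= s /\
    s <= 4 * INR n ^ 2 / (4 * INR n ^ 2 - 1) * (x / (INR n ^ 2 + x ^ 2)).
Proof.
  intros Hn Hx. assert (HN : 0 < INR n) by (apply lt_0_INR; lia).
  assert (HNx : 0 < INR n * x) by nra.
  pose proof (psi_lower n (INR n * x) Hn HNx) as HL.
  pose proof (psi_upper n (INR n * x) Hn HNx) as HU.
  set (N := INR n) in *.
  exists (N * psi N (N * x)), (psi N x).
  assert (Hscale : forall c, c * (x / (1 + x ^ 2)) = N * (c * (N * x / (N ^ 2 + (N * x) ^ 2))))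
    by (intros c; field; split; nra).
  rewrite !Hscale.
  repeat split.
  - unfold varphi. rewrite phi_eq_psi. unfold RtoC, Cmult. simpl. unfold N. f_equal; ring.
  - apply phi_eq_psi.
  - apply Rmult_le_compat_l; lra.
  - apply Rmult_le_compat_l; lra.
  - apply psi_lower; assumption.
  - apply psi_upper; assumption.
Qed.
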